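(* For every $n\ge1$ there is a bijection between $\bar{Q}_4(0,n)$ and $P_7(0,n)$.
   Context: Partitions: $\lambda_1\ge\cdots\ge\lambda_\ell>0$, $\ell(\lambda)=\ell$, $\lambda_i=0$ for $i>\ell$, $s(\lambda)$ the smallest part with $s(\emptyset)=+\infty$. Rank $=\lambda_1-\ell$. Durfee symbol $(\alpha,\beta)_j$ of $\lambda$: $j$ is the largest integer with $\lambda_j\ge j$, $\alpha$ is the conjugate of $(\lambda_1-j,\dots,\lambda_j-j)$, $\beta=(\lambda_{j+1},\lambda_{j+2},\dots)$; $|\lambda|=|\alpha|+|\beta|+j^2$. $\bar{Q}_4(0,n)$ is the set of partitions of $n$ whose Durfee symbol $(\alpha,\beta)_j$ satisfies $j\ge1$, $\ell(\beta)-\ell(\alpha)\ge1$, $\alpha_1=\alpha_2=j$, $s(\alpha)\ge2$, $\beta_1=\beta_2=j$ and $s(\beta)=2$. $P_7(0,n)$ is the set of partitions of $n$ with rank $\ge0$ whose Durfee symbol $(\gamma,\delta)_{j'}$ satisfies $j'\ge1$, $\ell(\gamma)=\ell(\delta)$, $\gamma_1=j'-1>\gamma_2$, $\delta_1=j'$, and $\delta$ has no part equal to $2$. *)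

From mathcomp Require Import all_boot.
Set Implicit Arguments. Unset Strict Implicit. Unset Printing Implicit Defensive.

Definition is_partition (l : seq nat) : bool :=
  sorted geq l && all (fun x => 0 < x) l.

Definition partition_of (n : nat) (l : seq nat) : bool :=
  is_partition l && (sumn l == n).

(* 1-based part: part l i = lambda_i, and lambda_i = 0 for i > ell(lambda) *)
Definition part (l : seq nat) (i : nat) : nat := nth 0 l i.-1.

(* smallest part; None encodes s(empty) = +infinity *)
Definition smallest (l : seq nat) : option nat :=
  if l is x :: t then Some (foldr minn x t) else None.

Definition smallest_ge (l : seq nat) (k : nat) : bool :=
  if smallest l is Some m then k <= m else true.

(* rank = lambda_1 - ell(lambda), as an integer *)
Definition rank_nonneg (l : seq nat) : bool := size l <= part l 1.

(* conjugate of a partition mu: mu'_k = #{ i | mu_i >= k }, k = 1..mu_1 *)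
Definition conjugate (mu : seq nat) : seq nat :=
  [seq count (fun x => k < x) mu | k <- iota 0 (part mu 1)].

Definition durfee (l : seq nat) : nat :=
  \max_(0 <= j < (size l).+1 | j <= part l j) j.

Definition dsym_alpha (l : seq nat) : seq nat :=
  conjugate [seq x - durfee l | x <- take (durfee l) l].
Definition dsym_beta (l : seq nat) : seq nat := drop (durfee l) l.

Definition Q4bar0 (n : nat) (l : seq nat) : Prop :=
  let j := durfee l in let a := dsym_alpha l in let b := dsym_beta l in
  partition_of n l /\ 1 <= j /\ size a < size b /\
  part a 1 = j /\ part a 2 = j /\ smallest_ge a 2 /\
  part b 1 = j /\ part b 2 = j /\ smallest b = Some 2.

Definition P70 (n : nat) (l : seq nat) : Prop :=
  let j := durfee l in let g := dsym_alpha l in let d := dsym_beta l in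
  partition_of n l /\ rank_nonneg l /\ 1 <= j /\ size g = size d /\
  part g 1 = j - 1 /\ part g 2 < part g 1 /\
  part d 1 = j /\ 2 \notin d.

From mathcomp Require Import all_boot zify.
Set Implicit Arguments. Unset Strict Implicit. Unset Printing Implicit Defensive.

(* A partition is determined by its Durfee symbol (alpha, beta)_j, and any
   pair of partitions alpha, beta with parts at most j is a Durfee symbol: the
   partition of_dsym j alpha beta is rebuilt from the j x j square, the
   conjugate of alpha and the rows of beta, and has size j^2 + |alpha| + |beta|.
   Reading the defining conditions on the symbol, Q4bar0 consists exactly of
   the partitions with alpha = (j, j, al), beta = (j, j, bl, 2), where al, bl
   are weakly decreasing with parts in [2, j] and ell(al) <= ell(bl); P70
   consists of those with gamma = (J-1, gl), delta = (J, dl), where gl has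
   parts in [1, J-2], dl has parts in [1, J] other than 2, ell(gl) = ell(dl).
   The bijection sets J = j + 1, gl = bl - 1 and dl = (al + 1) followed by
   ell(bl) - ell(al) ones; its inverse keeps the parts of dl above 1, lowers
   them by 1, and raises gl by 1.  Both directions preserve the size. *)

Lemma geq_trans : transitive geq.
Proof. by move=> a b c h1 h2; apply: leq_trans h2 h1. Qed.

Lemma sorted_geq_cons x s :
  sorted geq (x :: s) = all (fun y => y <= x) s && sorted geq s.
Proof. exact: (path_sortedE geq_trans). Qed.

Lemma is_partition_cons x s :
  is_partition (x :: s) = [&& all (fun y => y <= x) s, is_partition s & 0 < x].
Proof.
rewrite /is_partition sorted_geq_cons /=.
by case: (all _ s); case: (sorted _ s); case: (0 < x); case: (all _ s).
Qed.

Lemma nth_antimono l i i' : sorted geq l -> i <= i' -> nth 0 l i' <= nth 0 l i.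
Proof.
move=> hs hii'; case: (ltnP i' (size l)) => h; last by rewrite nth_default.
exact: (sorted_leq_nth geq_trans leqnn 0 hs) (leq_ltn_trans hii' h) h hii'.
Qed.

Lemma count_gt_nth s k i : sorted geq s ->
  (i < count (fun x => k < x) s) = (k < nth 0 s i).
Proof.
elim: s i => [|x t IH] i; first by rewrite nth_nil ltn0.
rewrite sorted_geq_cons => /andP[ha hs] /=.
case: (ltnP k x) => hkx.
  by case: i => [|i] //=; rewrite add1n ltnS IH.
have tk : all (fun y => y <= k) t by apply: sub_all ha => y hy; apply: leq_trans hkx.
have -> : count (fun x => k < x) t = 0.
  by apply/eqP; rewrite -leqn0 leqNgt -has_count; apply/hasPn => y /(allP tk); rewrite -leqNgt.
case: i => [|i] /=; first by rewrite [k < x]ltnNge hkx.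
case: (ltnP i (size t)) => hi; last by rewrite nth_default.
by rewrite [k < _]ltnNge (allP tk) // mem_nth.
Qed.

Lemma count_iota_lt m j : count (fun i => i < m) (iota 0 j) = minn m j.
Proof. elim: j => [|j IH]; first by rewrite minn0. rewrite -addn1 iotaD count_cat IH /=. lia. Qed.

Lemma sorted_cat_geq s1 s2 : sorted geq s1 -> sorted geq s2 ->
  all (fun y => all (fun z => z <= y) s2) s1 -> sorted geq (s1 ++ s2).
Proof.
elim: s1 => [|x s1 IH] //=.
rewrite -/(sorted geq (x :: s1)) sorted_geq_cons => /andP[ha hs] h2 /andP[hx hall].
by rewrite -/(sorted geq (x :: (s1 ++ s2))) sorted_geq_cons all_cat ha hx IH.
Qed.

Lemma sorted_map_mono (f : nat -> nat) s : {homo f : x y / x <= y} ->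
  sorted geq s -> sorted geq (map f s).
Proof. by move=> hf; apply: homo_sorted => x y; apply: hf. Qed.

Lemma sorted_nseq k x : sorted geq (nseq k x).
Proof. by elim: k => [|[|k] IH] //=; rewrite leqnn. Qed.

Lemma sorted_split_filter k s : sorted geq s ->
  s = filter (fun x => k < x) s ++ filter (fun x => x <= k) s.
Proof.
elim: s => [|x t IH] //; rewrite sorted_geq_cons => /andP[ha hs] /=.
case: (ltnP k x) => hkx /=; first by rewrite {1}(IH hs).
have tk : all (fun y => y <= k) t by apply: sub_all ha => y hy; apply: leq_trans hkx.
rewrite (all_filterP tk).
suff -> : filter (fun x => k < x) t = [::] by [].
by apply/eqP; rewrite -[_ == _]negbK -has_filter; apply/hasPn => y /(allP tk); rewrite -leqNgt.
Qed.

Lemma foldr_minn_le x t z : z \in x :: t -> foldr minn x t <= z.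
Proof.
elim: t z => [|y t IH] z /=; first by rewrite inE => /eqP ->.
rewrite !inE => /or3P[/eqP ->|/eqP ->|h]; rewrite geq_min ?leqnn ?orbT //.
  by rewrite IH ?mem_head ?orbT.
by rewrite IH ?inE ?h ?orbT.
Qed.

Lemma foldr_minn_mem x t : foldr minn x t \in x :: t.
Proof.
elim: t => [|y t IH] /=; first by rewrite mem_head.
rewrite /minn; case: ifP => _; rewrite !inE ?eqxx ?orbT //.
by move: IH; rewrite inE => /orP[->|->]; rewrite ?orbT.
Qed.

Lemma smallest_ge_cons x s k : smallest_ge (x :: s) k = all (leq k) (x :: s).
Proof.
rewrite /smallest_ge [smallest _]/=; apply/idP/allP => [h y /foldr_minn_le|]; first exact: leq_trans.
by apply; apply: foldr_minn_mem.
Qed.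

Lemma smallest_consP x s k :
  smallest (x :: s) = Some k <-> k \in x :: s /\ all (leq k) (x :: s).
Proof.
split=> [[<-]|[hk /allP hall]]; first by split; [apply: foldr_minn_mem | apply/allP => y /foldr_minn_le].
by congr Some; apply/eqP; rewrite eqn_leq foldr_minn_le // hall // foldr_minn_mem.
Qed.

Definition bounded (j : nat) (s : seq nat) : bool := all (fun x => x <= j) s.

(* The first j rows of the partition with Durfee symbol (a, b)_j: row i
   consists of the j cells of the Durfee square followed by the i-th part of
   the conjugate of a, i.e. the number of parts of a exceeding i. *)
Definition square_rows (j : nat) (a : seq nat) : seq nat :=
  [seq j + count (fun x => i < x) a | i <- iota 0 j].

Definition of_dsym (j : nat) (a b : seq nat) : seq nat := square_rows j a ++ b.

Lemma size_square_rows j a : size (square_rows j a) = j.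
Proof. by rewrite size_map size_iota. Qed.

Lemma nth_square_rows j a i : i < j ->
  nth 0 (square_rows j a) i = j + count (fun x => i < x) a.
Proof. by move=> h; rewrite (nth_map 0) ?size_iota // nth_iota. Qed.

Lemma conjugate_counts j a : is_partition a -> bounded j a ->
  conjugate [seq count (fun x => i < x) a | i <- iota 0 j] = a.
Proof.
move=> /andP[hs hp] hb.
case: j hb => [|j] hb.
  by case: a hs hp hb => [|x a] //= _ /andP[hx _] /andP[hx' _]; lia.
have all_pos : count (fun x => 0 < x) a = size a by apply/eqP; rewrite -all_count.
rewrite /conjugate /part (nth_map 0) ?size_iota // nth_iota // add0n all_pos.
apply: (@eq_from_nth _ 0); first by rewrite size_map size_iota.
move=> k; rewrite size_map size_iota => hk.
rewrite (nth_map 0) ?size_iota // nth_iota // add0n count_map.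
rewrite (eq_count (a2 := fun i => i < nth 0 a k)); last by move=> i /=; rewrite count_gt_nth.
by rewrite count_iota_lt; apply/minn_idPl; apply: (allP hb); rewrite mem_nth.
Qed.

Lemma sumn_map_add (T : Type) (f g : T -> nat) s :
  sumn [seq f x + g x | x <- s] = sumn [seq f x | x <- s] + sumn [seq g x | x <- s].
Proof. by elim: s => //= x s ->; lia. Qed.

(* Counting the pairs (i, x) with i < x in two ways. *)
Lemma double_count (s a : seq nat) :
  sumn [seq count (fun x => i < x) a | i <- s] = sumn [seq count (fun i => i < x) s | x <- a].
Proof.
elim: s => [|i s IH] /=; first by elim: a => //= x a <-.
by rewrite IH (sumn_map_add (fun x => nat_of_bool (i < x))) sumn_count.
Qed.

Lemma sumn_square_rows j a : bounded j a -> sumn (square_rows j a) = j * j + sumn a.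
Proof.
move=> hb; rewrite /square_rows (sumn_map_add (fun _ => j)) double_count.
have sum_const (s : seq nat) : sumn [seq j | _ <- s] = j * size s.
  by elim: s => [|_ s /= ->]; rewrite ?muln0 ?mulnS.
rewrite sum_const size_iota.
congr (_ + _); elim: a hb => //= x a IH /andP[hx hb].
by rewrite IH // count_iota_lt (minn_idPl hx).
Qed.

(* of_dsym j a b is a partition whenever b is one with parts at most j:
   the square rows decrease and each has at least j cells. *)
Lemma of_dsym_partition j a b : is_partition b -> bounded j b ->
  is_partition (of_dsym j a b).
Proof.
move=> /andP[hs hp] hb; apply/andP; split.
  apply: sorted_cat_geq => //.
    rewrite /square_rows -[iota 0 j]/(iota 0 j).
    apply: (homo_sorted (e := leq)); last exact: iota_sorted.
    by move=> x y hxy /=; rewrite leq_add2l; apply: sub_count => z /=; apply: leq_ltn_trans.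
  apply/allP => y /mapP[i _ ->]; apply: sub_all hb => z hz.
  exact: leq_trans hz (leq_addr _ _).
rewrite all_cat hp andbT; apply/allP => y /mapP[i]; rewrite mem_iota => /andP[_ hi] ->.
lia.
Qed.

Lemma sumn_of_dsym j a b : bounded j a -> sumn (of_dsym j a b) = j * j + sumn a + sumn b.
Proof. by move=> h; rewrite sumn_cat sumn_square_rows. Qed.

Lemma durfee_eq l j : sorted geq l -> j <= part l j -> part l j.+1 <= j ->
  j <= size l -> durfee l = j.
Proof.
move=> hs h1 h2 h3; apply/eqP; rewrite eqn_leq; apply/andP; split.
  apply: (big_ind (fun m => m <= j)) => //; first by move=> x y; rewrite geq_max => -> ->.
  move=> i hi; rewrite leqNgt; apply/negP => hij.
  have : part l i <= part l j.+1 by apply: nth_antimono => //=; lia.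
  lia.
by apply: (leq_bigmax_seq j) => //; rewrite mem_index_iota; lia.
Qed.

Lemma durfee_props l : sorted geq l ->
  [/\ durfee l <= part l (durfee l), part l (durfee l).+1 <= durfee l &
      durfee l <= size l].
Proof.
move=> hs.
have P1 : durfee l <= part l (durfee l).
  apply: (big_ind (fun m => m <= part l m)) => //.
  by move=> x y hx hy; rewrite /maxn; case: ifP.
have P3 : durfee l <= size l.
  move: P1; case: (durfee l) => [|m] //.
  by rewrite /part /= => h; case: (ltnP m (size l)) => // hm; move: h; rewrite nth_default.
split => //; rewrite leqNgt; apply/negP => h.
have hm : durfee l < size l.
  by case: (ltnP (durfee l) (size l)) => // hm; move: h; rewrite /part /= nth_default.
have : (durfee l).+1 <= durfee l.
  rewrite {2}/durfee; apply: (leq_bigmax_seq (durfee l).+1) => //.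
  by rewrite mem_index_iota; lia.
by rewrite ltnn.
Qed.

Lemma dsym_of_dsym j a b : is_partition a -> bounded j a -> is_partition b -> bounded j b ->
  [/\ durfee (of_dsym j a b) = j, dsym_alpha (of_dsym j a b) = a &
      dsym_beta (of_dsym j a b) = b].
Proof.
move=> ha hab hb hbb.
have hs : sorted geq (of_dsym j a b) by case/andP: (of_dsym_partition a hb hbb).
have dj : durfee (of_dsym j a b) = j.
  apply: durfee_eq => //; rewrite /part /of_dsym.
  - case: j {hs hab hbb} => [|j] //; rewrite [_.-1]/=.
    by rewrite nth_cat size_square_rows ltnSn nth_square_rows //; lia.
  - rewrite [_.-1]/= nth_cat size_square_rows ltnn subnn.
    by move: hbb; case: (b) => [|x b'] //= /andP[].
  - by rewrite size_cat size_square_rows leq_addr.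
split => //; rewrite /dsym_alpha /dsym_beta dj /of_dsym.
  rewrite take_size_cat ?size_square_rows // /square_rows -map_comp.
  rewrite (eq_map (g := fun i => count (fun x => i < x) a)); last by move=> i /=; rewrite addKn.
  exact: conjugate_counts.
by rewrite drop_size_cat // size_square_rows.
Qed.

Lemma of_dsym_dsym l : is_partition l -> of_dsym (durfee l) (dsym_alpha l) (dsym_beta l) = l.
Proof.
move=> /andP[hs hp]; case: (durfee_props hs) => h1 h2 h3.
set j := durfee l in h1 h2 h3 *.
rewrite /of_dsym /dsym_beta -[RHS](cat_take_drop j l); congr (_ ++ _).
set nu := [seq x - j | x <- take j l].
have hnu : sorted geq nu.
  by apply: sorted_map_mono; [exact: leq_sub2r | exact: take_sorted].
apply: (@eq_from_nth _ 0); first by rewrite size_square_rows size_take_min; lia.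
move=> i; rewrite size_square_rows => hi.
rewrite nth_square_rows // /dsym_alpha -/j -/nu /conjugate count_map.
rewrite (eq_count (a2 := fun k => k < nth 0 nu i)); last by move=> k /=; rewrite count_gt_nth.
rewrite count_iota_lt (minn_idPl (nth_antimono hnu (leq0n i))).
rewrite /nu (nth_map 0) ?size_take_min ?nth_take //; last by lia.
have : j <= nth 0 l i by apply: leq_trans h1 _; apply: nth_antimono => //; lia.
lia.
Qed.

Lemma dsym_alpha_props l : sorted geq l ->
  is_partition (dsym_alpha l) /\ bounded (durfee l) (dsym_alpha l).
Proof.
move=> hs; set j := durfee l; set nu := [seq x - j | x <- take j l].
have hnu : sorted geq nu.
  by apply: sorted_map_mono; [exact: leq_sub2r | exact: take_sorted].
rewrite /dsym_alpha -/j -/nu /conjugate; split; last first.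
  apply/allP => y /mapP[k _ ->]; apply: leq_trans (count_size _ _) _.
  by rewrite /nu size_map size_take_min geq_minl.
apply/andP; split.
  apply: (homo_sorted (e := leq)); last exact: iota_sorted.
  by move=> x y hxy; apply: sub_count => z /=; apply: leq_ltn_trans.
apply/allP => y /mapP[k]; rewrite mem_iota add0n /part /= => hk ->.
by rewrite count_gt_nth.
Qed.

Lemma dsym_beta_props l : is_partition l ->
  is_partition (dsym_beta l) /\ bounded (durfee l) (dsym_beta l).
Proof.
move=> /andP[hs hp]; case: (durfee_props hs) => _ h2 _.
have hd : sorted geq (drop (durfee l) l) by apply: drop_sorted.
rewrite /dsym_beta; split.
  by rewrite /is_partition hd; move: hp; rewrite -{1}(cat_take_drop (durfee l) l) all_cat => /andP[].
move: hd h2; rewrite /part /= -{2}[durfee l]addn0 -nth_drop.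
case: (drop _ _) => [|x t] //; rewrite sorted_geq_cons => /andP[ha _] /= hx.
by rewrite /bounded /= hx /=; apply: sub_all ha => y hy; exact: leq_trans hy hx.
Qed.

Definition decreasing_in (lo hi : nat) (s : seq nat) : bool :=
  sorted geq s && all (fun x => lo <= x <= hi) s.

Definition Q_data (j : nat) (al bl : seq nat) : Prop :=
  [/\ 2 <= j, decreasing_in 2 j al, decreasing_in 2 j bl & size al <= size bl].

Definition P_data (J : nat) (gl dl : seq nat) : Prop :=
  [/\ 3 <= J, decreasing_in 1 (J - 2) gl, decreasing_in 1 J dl, 2 \notin dl
    & size gl = size dl].

Definition Q_shape (j : nat) (al bl : seq nat) : seq nat :=
  of_dsym j (j :: j :: al) (j :: j :: rcons bl 2).

Definition P_shape (J : nat) (gl dl : seq nat) : seq nat :=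
  of_dsym J (J.-1 :: gl) (J :: dl).

Lemma decreasing_in_partition lo hi s : 0 < lo -> decreasing_in lo hi s ->
  is_partition s /\ bounded hi s.
Proof.
move=> hlo /andP[hs hb]; rewrite /is_partition /bounded hs.
by split; apply: sub_all hb => x /andP[h1 h2] //; apply: leq_trans h1.
Qed.

Lemma partition_cons x s : 0 < x -> is_partition s -> bounded x s -> is_partition (x :: s).
Proof. by move=> hx hs hb; rewrite is_partition_cons; apply/and3P. Qed.

Lemma bounded_weaken j k s : j <= k -> bounded j s -> bounded k s.
Proof. by move=> hjk; apply: sub_all => x hx; apply: leq_trans hjk. Qed.

Lemma Q_shape_dsym j al bl : Q_data j al bl ->
  [/\ is_partition (Q_shape j al bl), bounded j (j :: j :: al),
      durfee (Q_shape j al bl) = j, dsym_alpha (Q_shape j al bl) = j :: j :: al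
    & dsym_beta (Q_shape j al bl) = j :: j :: rcons bl 2].
Proof.
case=> hj hal hbl _.
have [pal bal] := decreasing_in_partition (isT : 0 < 2) hal.
have [pbl bbl] := decreasing_in_partition (isT : 0 < 2) hbl.
have pbl2 : is_partition (rcons bl 2).
  case/andP: pbl => sbl ppos; rewrite /is_partition -cats1 all_cat ppos andbT /=.
  apply: sorted_cat_geq => //; apply: sub_all (proj2 (andP hbl)) => x /andP[h _] /=.
  by rewrite h.
have bbl2 : bounded j (rcons bl 2) by rewrite /bounded all_rcons hj.
have ba : bounded j (j :: j :: al) by rewrite /bounded /= leqnn; exact: bal.
have bb : bounded j (j :: j :: rcons bl 2) by rewrite /bounded /= leqnn; exact: bbl2.
have j_pos : 0 < j by apply: leq_trans hj.
have pa : is_partition (j :: j :: al).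
  by apply: partition_cons => //; [exact: partition_cons | exact: (proj2 (andP ba))].
have pb : is_partition (j :: j :: rcons bl 2).
  by apply: partition_cons => //; [exact: partition_cons | exact: (proj2 (andP bb))].
have [hd ha hb] := dsym_of_dsym pa ba pb bb.
by split; rewrite ?of_dsym_partition.
Qed.

Lemma P_shape_dsym J gl dl : P_data J gl dl ->
  [/\ is_partition (P_shape J gl dl), bounded J (J.-1 :: gl),
      durfee (P_shape J gl dl) = J, dsym_alpha (P_shape J gl dl) = J.-1 :: gl
    & dsym_beta (P_shape J gl dl) = J :: dl].
Proof.
case=> hJ hgl hdl _ _.
have [pgl bgl] := decreasing_in_partition (isT : 0 < 1) hgl.
have [pdl bdl] := decreasing_in_partition (isT : 0 < 1) hdl.
have pa : is_partition (J.-1 :: gl).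
  by rewrite partition_cons //; [lia | apply: bounded_weaken bgl; lia].
have ba : bounded J (J.-1 :: gl) by rewrite /bounded /= leq_pred; apply: bounded_weaken bgl; lia.
have pb : is_partition (J :: dl) by rewrite partition_cons //; lia.
have bb : bounded J (J :: dl) by rewrite /bounded /= leqnn.
have [hd ha hb] := dsym_of_dsym pa ba pb bb.
by split; rewrite ?of_dsym_partition.
Qed.

Lemma sumn_Q_shape j al bl : Q_data j al bl ->
  sumn (Q_shape j al bl) = j * j + 4 * j + 2 + sumn al + sumn bl.
Proof.
move=> hq; have [_ ba _ _ _] := Q_shape_dsym hq.
by rewrite /Q_shape sumn_of_dsym //= sumn_rcons; lia.
Qed.

Lemma sumn_P_shape J gl dl : P_data J gl dl ->
  sumn (P_shape J gl dl) = J * J + J.-1 + J + sumn gl + sumn dl.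
Proof.
move=> hp; have [_ ba _ _ _] := P_shape_dsym hp.
by rewrite /P_shape sumn_of_dsym //=; lia.
Qed.

Lemma Q_shape_Q4bar0 j al bl : Q_data j al bl ->
  Q4bar0 (sumn (Q_shape j al bl)) (Q_shape j al bl).
Proof.
move=> hq; have [hpart _ ed ea eb] := Q_shape_dsym hq; rewrite /Q4bar0 ed ea eb.
case: hq => hj /andP[_ hal] /andP[_ hbl] hsz.
split; first by rewrite /partition_of hpart eqxx.
split; first lia.
split; first by rewrite /= size_rcons; lia.
do 2 split => //.
split.
  by rewrite smallest_ge_cons /= hj; apply: sub_all hal => x /andP[].
do 2 split => //.
apply/smallest_consP; split; first by rewrite !inE mem_rcons mem_head !orbT.
by rewrite /= all_rcons hj; apply: sub_all hbl => x /andP[].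
Qed.

Lemma P_shape_P70 J gl dl : P_data J gl dl ->
  P70 (sumn (P_shape J gl dl)) (P_shape J gl dl).
Proof.
move=> hp; have [hpart _ ed ea eb] := P_shape_dsym hp; rewrite /P70 ed ea eb.
case: hp => hJ /andP[_ hgl] _ hd2 hsz.
split; first by rewrite /partition_of hpart eqxx.
split.
  rewrite /rank_nonneg /part /P_shape /of_dsym size_cat size_square_rows /=.
  rewrite nth_cat size_square_rows (_ : 0 < J) ?nth_square_rows; try lia.
  have -> : count (leq 1) (J.-1 :: gl) = size (J.-1 :: gl).
    by apply/eqP; rewrite -all_count /=; apply/andP; split; [lia | apply: sub_all hgl => x /andP[]].
  by rewrite /= hsz.
split; first lia.
split; first by rewrite /= hsz.
split; first by rewrite /part /=; lia.
split.
  rewrite /part /=; case: (gl) hgl => [|x t] /=; first lia.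
  by case/andP => /andP[_ hx] _; lia.
split => //.
by rewrite inE negb_or hd2 andbT; apply/eqP; lia.
Qed.

Lemma sorted_last_le x t z : sorted geq (x :: t) -> z \in x :: t -> last x t <= z.
Proof.
elim: t x z => [|y t IH] x z /=; first by move=> _; rewrite inE => /eqP ->.
move=> /andP[hxy hs]; rewrite inE => /orP[/eqP ->|hz]; last exact: IH.
exact: leq_trans (IH y y hs (mem_head _ _)) hxy.
Qed.

Lemma Q_symbol_data j a b : is_partition a -> bounded j a -> is_partition b -> bounded j b ->
  1 <= j -> size a < size b -> part a 1 = j -> part a 2 = j -> smallest_ge a 2 ->
  part b 1 = j -> part b 2 = j -> smallest b = Some 2 ->
  exists al bl, [/\ Q_data j al bl, a = j :: j :: al & b = j :: j :: rcons bl 2].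
Proof.
move=> hpa hba hpb hbb hj hsz.
case: a hpa hba hsz => [|x [|y al]] hpa hba hsz; rewrite /part /=; try lia.
move=> ex ey; subst x y.
rewrite smallest_ge_cons => ha2.
case: b hpb hbb hsz => [|x [|y u]] hpb hbb hsz; rewrite /part /= => // ex ey; subst x y.
case/lastP: u hpb hbb hsz => [|bl z] hpb hbb hsz; first by rewrite /= in hsz.
move=> hsb; have [h2b hb2] : 2 \in j :: j :: rcons bl z /\ all (leq 2) (j :: j :: rcons bl z).
  by apply/smallest_consP; exact: hsb.
have sb := proj1 (andP hpb).
have -> : z = 2.
  apply/eqP; rewrite eqn_leq (allP hb2) ?(mem_rcons, inE, eqxx, orbT) //.
  by rewrite andbT; have := sorted_last_le sb h2b; rewrite last_cons last_rcons.
exists al, bl; split => //; split.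
- by apply: (allP ha2); rewrite mem_head.
- rewrite /decreasing_in (path_sorted (path_sorted (proj1 (andP hpa)))) /=.
  by apply/allP => x hx; rewrite (allP ha2) ?(allP hba) // !inE hx !orbT.
- have /cat_sorted2[sbl _] : sorted geq (bl ++ [:: z]).
    by rewrite cats1; apply: path_sorted (path_sorted sb).
  rewrite /decreasing_in sbl /=.
  by apply/allP => x hx; rewrite (allP hb2) ?(allP hbb) // !inE mem_rcons inE hx !orbT.
- by rewrite /= size_rcons in hsz; lia.
Qed.

Lemma P_symbol_data J g d : is_partition g -> bounded J g -> is_partition d -> bounded J d ->
  1 <= J -> size g = size d -> part g 1 = J - 1 -> part g 2 < part g 1 ->
  part d 1 = J -> 2 \notin d ->
  exists gl dl, [/\ P_data J gl dl, g = J.-1 :: gl & d = J :: dl].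
Proof.
move=> hpg hbg hpd hbd hJ hsz.
case: g hpg hbg hsz => [|x gl] hpg hbg hsz; rewrite /part /= => // ex hlt.
case: d hpd hbd hsz => [|y dl] hpd hbd hsz //= ey hd2; subst y.
have hJ3 : 3 <= J.
  have : J != 2 by apply: contra hd2 => /eqP ->; rewrite mem_head.
  lia.
have -> : x = J.-1 by lia.
exists gl, dl; split => //; move: hpg hpd; rewrite !is_partition_cons.
case/and3P=> _ /andP[sgl pgl] _ /and3P[_ /andP[sdl pdl] _].
split => //.
- rewrite /decreasing_in sgl; apply/allP => y hy; rewrite (allP pgl) //=.
  suff : y <= nth 0 gl 0 by lia.
  by move: sgl hy; case: (gl) => [|z t] //=; rewrite inE => hs /orP[/eqP ->|/(allP (order_path_min geq_trans hs))].
- rewrite /decreasing_in sdl; apply/allP => y hy.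
  by rewrite (allP pdl) // (allP (proj2 (andP hbd))).
- by apply: contra hd2; rewrite inE => ->; rewrite orbT.
- by case: hsz.
Qed.

Lemma Q4bar0_shape n l : Q4bar0 n l -> exists j al bl, Q_data j al bl /\ l = Q_shape j al bl.
Proof.
case=> /andP[hp _] [hj [hsz [ha1 [ha2 [hsa [hb1 [hb2 hsb]]]]]]].
have [hpa hba] := dsym_alpha_props (proj1 (andP hp)).
have [hpb hbb] := dsym_beta_props hp.
have [al [bl [hq ea eb]]] := Q_symbol_data hpa hba hpb hbb hj hsz ha1 ha2 hsa hb1 hb2 hsb.
by exists (durfee l), al, bl; rewrite /Q_shape -ea -eb of_dsym_dsym.
Qed.

Lemma P70_shape n l : P70 n l -> exists J gl dl, P_data J gl dl /\ l = P_shape J gl dl.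
Proof.
case=> /andP[hp _] [_ [hj [hsz [hg1 [hg2 [hd1 hd2]]]]]].
have [hpg hbg] := dsym_alpha_props (proj1 (andP hp)).
have [hpd hbd] := dsym_beta_props hp.
have [gl [dl [hq eg ed]]] := P_symbol_data hpg hbg hpd hbd hj hsz hg1 hg2 hd1 hd2.
by exists (durfee l), gl, dl; rewrite /P_shape -eg -ed of_dsym_dsym.
Qed.

Definition gamma_of (bl : seq nat) : seq nat := map predn bl.
Definition delta_of (al bl : seq nat) : seq nat :=
  map succn al ++ nseq (size bl - size al) 1.
Definition alpha_of (dl : seq nat) : seq nat := map predn (filter (fun x => 1 < x) dl).
Definition beta_of (gl : seq nat) : seq nat := map succn gl.

Lemma map_pred_succ s : map predn (map succn s) = s.
Proof. by elim: s => //= x s ->. Qed.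

Lemma map_succ_pred s : all (fun x => 0 < x) s -> map succn (map predn s) = s.
Proof. by elim: s => //= x s IH /andP[hx hs]; rewrite IH // prednK. Qed.

Lemma sumn_pred s : all (fun x => 0 < x) s -> sumn (map predn s) + size s = sumn s.
Proof. by elim: s => //= x s IH /andP[hx hs]; have := IH hs; lia. Qed.

Lemma sumn_succ s : sumn (map succn s) = sumn s + size s.
Proof. by elim: s => //= x s ->; lia. Qed.

Lemma filter_le1 dl : all (fun x => 0 < x) dl ->
  filter (fun x => x <= 1) dl = nseq (size dl - count (fun x => 1 < x) dl) 1.
Proof.
move=> hp.
have -> : size dl - count (fun x => 1 < x) dl = size (filter (fun x => x <= 1) dl).
  rewrite size_filter -(count_predC (fun x => 1 < x) dl).
  by rewrite (eq_count (a1 := predC _) (a2 := fun x => x <= 1)) => [|x /=]; [lia | rewrite -leqNgt].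
apply/all_pred1P/allP => x; rewrite mem_filter => /andP[h1 h2].
by rewrite /= eqn_leq h1 (allP hp x h2).
Qed.

Lemma Q_to_P_data j al bl : Q_data j al bl -> P_data j.+1 (gamma_of bl) (delta_of al bl).
Proof.
case=> hj /andP[sal hal] /andP[sbl hbl] hsz; split.
- lia.
- rewrite /decreasing_in sorted_map_mono //; last by move=> x y; lia.
  by rewrite all_map; apply: sub_all hbl => y /= /andP[h1 h2]; lia.
- rewrite /decreasing_in /delta_of sorted_cat_geq ?sorted_nseq ?sorted_map_mono //=.
  + rewrite all_cat all_map all_nseq; apply/andP; split; last by lia.
    by apply: sub_all hal => y /= /andP[h1 h2]; lia.
  + by rewrite all_map; apply/allP => y _ /=; rewrite all_nseq; lia.
- rewrite /delta_of mem_cat mem_nseq andbF orbF; apply/mapP => -[y /(allP hal) hy hy2].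
  lia.
- by rewrite size_map size_cat size_map size_nseq; lia.
Qed.

Lemma P_to_Q_data J gl dl : P_data J gl dl -> Q_data J.-1 (alpha_of dl) (beta_of gl).
Proof.
case=> hJ /andP[sgl hgl] /andP[sdl hdl] hd2 hsz; split.
- lia.
- have pred_mono : {homo predn : x y / x <= y} by move=> x y; lia.
  rewrite /decreasing_in sorted_map_mono ?sorted_filter //; last exact: geq_trans.
  rewrite all_map; apply/allP => x; rewrite mem_filter => /andP[h1 h2] /=.
  have := allP hdl x h2; have : x != 2 by apply: contraNneq hd2 => <-.
  lia.
- rewrite /decreasing_in sorted_map_mono // all_map.
  by apply: sub_all hgl => y /= /andP[h1 h2]; lia.
- by rewrite !size_map size_filter hsz count_size.
Qed.

Lemma Q_round_trip j al bl : Q_data j al bl ->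
  alpha_of (delta_of al bl) = al /\ beta_of (gamma_of bl) = bl.
Proof.
case=> _ /andP[_ hal] /andP[_ hbl] _; split.
  rewrite /alpha_of /delta_of filter_cat filter_nseq /= cats0 (all_filterP _).
    exact: map_pred_succ.
  by rewrite all_map; apply: sub_all hal => y /andP[h _] /=; lia.
by apply: map_succ_pred; apply: sub_all hbl => y /andP[h _]; lia.
Qed.

Lemma P_round_trip J gl dl : P_data J gl dl ->
  gamma_of (beta_of gl) = gl /\ delta_of (alpha_of dl) (beta_of gl) = dl.
Proof.
case=> _ _ /andP[sdl hdl] _ hsz; split; first exact: map_pred_succ.
have dl_pos : all (fun x => 0 < x) dl by apply: sub_all hdl => y /andP[].
rewrite /delta_of /alpha_of map_succ_pred; last first.
  by apply/allP => x; rewrite mem_filter => /andP[h _]; lia.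
by rewrite !size_map size_filter hsz -filter_le1 // -sorted_split_filter.
Qed.

Lemma Q_to_P_weight j al bl : Q_data j al bl ->
  sumn (P_shape j.+1 (gamma_of bl) (delta_of al bl)) = sumn (Q_shape j al bl).
Proof.
move=> hq; rewrite sumn_P_shape ?sumn_Q_shape //; last exact: Q_to_P_data.
case: hq => _ _ /andP[_ hbl] hsz.
have bl_pos : all (fun x => 0 < x) bl by apply: sub_all hbl => y /andP[h _]; lia.
have := sumn_pred bl_pos.
rewrite /gamma_of /delta_of sumn_cat sumn_succ sumn_nseq /=; lia.
Qed.

Definition Q_to_P (l : seq nat) : seq nat :=
  let b := dsym_beta l in
  let bl := drop 2 (take (size b).-1 b) in
  P_shape (durfee l).+1 (gamma_of bl) (delta_of (drop 2 (dsym_alpha l)) bl).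

Definition P_to_Q (l : seq nat) : seq nat :=
  Q_shape (durfee l).-1 (alpha_of (behead (dsym_beta l))) (beta_of (behead (dsym_alpha l))).

Lemma Q_to_P_shape j al bl : Q_data j al bl ->
  Q_to_P (Q_shape j al bl) = P_shape j.+1 (gamma_of bl) (delta_of al bl).
Proof.
move=> hq; have [_ _ ed ea eb] := Q_shape_dsym hq.
by rewrite /Q_to_P ed ea eb /= size_rcons -cats1 [take _ (_ :: _)]/= take_size_cat //= !drop0.
Qed.

Lemma P_to_Q_shape J gl dl : P_data J gl dl ->
  P_to_Q (P_shape J gl dl) = Q_shape J.-1 (alpha_of dl) (beta_of gl).
Proof. by move=> hp; have [_ _ ed ea eb] := P_shape_dsym hp; rewrite /P_to_Q ed ea eb. Qed.

Theorem lemma5p4 (n : nat) : 1 <= n ->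
  exists (f g : seq nat -> seq nat),
    (forall l, Q4bar0 n l -> P70 n (f l) /\ g (f l) = l) /\
    (forall l, P70 n l -> Q4bar0 n (g l) /\ f (g l) = l).
Proof.
move=> _; exists Q_to_P, P_to_Q; split.
  move=> l hQ; have [j [al [bl [hq el]]]] := Q4bar0_shape hQ.
  have [ea eb] := Q_round_trip hq.
  have <- : sumn l = n by case: hQ => /andP[_ /eqP].
  rewrite el Q_to_P_shape // -Q_to_P_weight //; split.
    exact/P_shape_P70/Q_to_P_data.
  by rewrite P_to_Q_shape ?ea ?eb //; exact: Q_to_P_data.
move=> l hP; have [J [gl [dl [hp el]]]] := P70_shape hP.
have hq := P_to_Q_data hp; have [eg ed] := P_round_trip hp.
have <- : sumn l = n by case: hP => /andP[_ /eqP].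
have eJ : J.-1.+1 = J by case: hp => hJ *; lia.
rewrite el P_to_Q_shape // Q_to_P_shape // eJ eg ed; split => //.
by have := Q_shape_Q4bar0 hq; rewrite -Q_to_P_weight // eJ eg ed.
Qed.
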